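(* Fix $n\in\mathbb Z_{\ge2}$. Let $(\pi,\mathfrak c)$ be an inherited coloured permutation (for $\searrow_n$), let $(y,f)$ be an active site of $(\pi,\mathfrak c)$, and let $i\in[|\pi|]$. Then: (1) if $\mathfrak c(i)\ge f$, then $y>\pi(i)$; (2) if $\pi(i)<y$ and $\mathfrak c(i)<f$, then there exists $k>i$ with $\pi(k)\ge y$ and $\mathfrak c(k)=\mathfrak c(i)$; (3) if $\pi(i)<y$ and $\mathfrak c(i)<f$, then there exists $h>i$ with $\pi(h)\ge y$ and $\mathfrak c(h)=f-1$.
   Context: $\searrow_n=n(n-1)\cdots1$; $\mathrm{Av}(\searrow_n)$ is the set of permutations with no (not necessarily consecutive) occurrence of $\searrow_n$, $\mathrm{Av}_m(\searrow_n)$ those of size $m$. For $\pi\in\mathcal S_m$ and $y\in[m+1]$, $\pi^{*y}$ is the permutation of $[m+1]$ with entries in the same relative order as $\pi(1),\dots,\pi(m),y-1/2$. A colouring of $\pi\in\mathcal S_m$ is a map $\mathfrak c:[m]\to\mathbb Z_{\ge1}$; for $I=\{i_1<\dots<i_j\}$, $\mathrm{pat}_I(\sigma,\mathfrak c)=(\mathrm{pat}_I(\sigma),\mathfrak c')$ with $\mathfrak c'(\ell)=\mathfrak c(i_\ell)$, where $\mathrm{pat}_I(\sigma)$ is the permutation with entries in the same relative order as $\sigma(i_1),\dots,\sigma(i_j)$; $\mathrm{en}_j=\mathrm{pat}_{\{m-j+1,\dots,m\}}$. The RITMO colouring $\mathbb C(\sigma)$ processes indices in decreasing order of value, giving index $i$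 the smallest positive integer $c$ such that no already coloured index $j<i$ has colour $c$ (equivalently: colour 1 on left-to-right maxima, colour 2 on left-to-right maxima of the remaining entries, etc.); $\mathbb S(\sigma)=(\sigma,\mathbb C(\sigma))$. A coloured permutation $(\pi,\mathfrak c)$ with $\pi\in\mathrm{Av}_k(\searrow_n)$ is inherited if there is $\sigma\in\mathrm{Av}(\searrow_n)$ with $|\sigma|\ge k$ and $\mathrm{en}_k(\mathbb S(\sigma))=(\pi,\mathfrak c)$ (its colours then lie in $[n-1]$). For $y\in[|\pi|+1]$ and $f\ge1$, $(\pi,\mathfrak c)^{*(y,f)}=(\pi^{*y},\mathfrak c^{*f})$ where $\mathfrak c^{*f}$ agrees with $\mathfrak c$ on $[|\pi|]$ and gives colour $f$ to index $|\pi|+1$. An active site of an inherited $(\pi,\mathfrak c)$ is a pair $(y,f)$ with $y\in[|\pi|+1]$, $f\in[n-1]$, such that $(\pi,\mathfrak c)^{*(y,f)}$ is inherited. *)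

From mathcomp Require Import all_boot.
Set Implicit Arguments. Unset Strict Implicit. Unset Printing Implicit Defensive.

(* Permutations of [m] are represented as sequences s of naturals with
   perm_eq s (iota 1 m); positions are 1-based: s(i) = nth 0 s (i-1).
   A colouring is a seq nat of the same size (colour of index i = nth 0 c (i-1)). *)

Definition at_ (s : seq nat) (i : nat) : nat := nth 0 s i.-1.

Definition is_perm (s : seq nat) : bool := perm_eq s (iota 1 (size s)).

Definition pat (s : seq nat) : seq nat :=
  map (fun x => (count (fun z => z < x) s).+1) s.

Definition decr (n : nat) : seq nat := rev (iota 1 n).

Definition contains (s p : seq nat) : Prop :=
  exists m : bitseq, size m = size s /\ pat (mask m s) = p.

Definition Av (n : nat) (s : seq nat) : Prop := is_perm s /\ ~ contains s (decr n).

(* pi^{*y}: relative order of pi(1),...,pi(m), y - 1/2 (values doubled) *)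
Definition star (s : seq nat) (y : nat) : seq nat :=
  pat (rcons (map (fun x => x.*2) s) (y.*2).-1).

(* RITMO colouring: process values m, m-1, ..., 1; the index i holding
   the current value gets the smallest c >= 1 not used by an already
   coloured index j < i (uncoloured indices carry 0). *)
Definition mex1 (used : seq nat) : nat :=
  head 0 [seq c <- iota 1 (size used).+1 | c \notin used].

Definition ritmo_step (s : seq nat) (col : seq nat) (v : nat) : seq nat :=
  let i := index v s in
  let used := [seq nth 0 col j | j <- iota 0 i] in
  set_nth 0 col i (mex1 used).

Definition ritmo (s : seq nat) : seq nat :=
  foldl (ritmo_step s) (nseq (size s) 0) (rev (iota 1 (size s))).

Definition en (k : nat) (s c : seq nat) : seq nat * seq nat :=
  (pat (drop (size s - k) s), drop (size s - k) c).

Definition inherited (n : nat) (pi c : seq nat) : Prop :=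
  Av n pi /\ size c = size pi /\
  exists sigma : seq nat, Av n sigma /\ size pi <= size sigma /\
    en (size pi) sigma (ritmo sigma) = (pi, c).

Definition active_site (n : nat) (pi c : seq nat) (y f : nat) : Prop :=
  [/\ 1 <= y <= (size pi).+1, 1 <= f <= n.-1 &
      inherited n (star pi y) (rcons c f)].

From mathcomp Require Import all_boot zify.
Set Implicit Arguments. Unset Strict Implicit. Unset Printing Implicit Defensive.

(* Write col := ritmo s for a permutation s (0-based positions).
   The RITMO colouring is characterised by: col(i) is the least positive
   colour not carried by an earlier index j < i with s(j) > s(i).  Two facts
   follow:
   - (monotonicity) if j < i and s(j) > s(i), then col(j) < col(i);
   - (lower colours) every colour 1 <= b < col(i) is carried by some j < i
     with s(j) > s(i).
   Combining them, if a < L, s(a) < s(L) and col(a) <= b < col(L), the colour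
   b is carried by an index strictly between a and L whose value exceeds s(L).
   An active site (y, f) of (pi, c) provides sigma whose last |pi| + 1 entries
   are order-isomorphic to pi(1), ..., pi(|pi|), y - 1/2, with RITMO colours
   c followed by f.  Statement (1) is monotonicity at the new last entry, and
   (2), (3) are the "colour between" fact for b = c(i) and b = f - 1. *)

Lemma head_filter_find (p : pred nat) (r : seq nat) :
  has p r -> head 0 (filter p r) = nth 0 r (find p r).
Proof. elim: r => //= x r IH; case: (p x) => //= /IH. Qed.

Lemma mex1P (used : seq nat) : [/\ 1 <= mex1 used, mex1 used \notin used &
  forall b, 1 <= b < mex1 used -> b \in used].
Proof.
have has_free : has (fun c => c \notin used) (iota 1 (size used).+1).
  apply/negPn/negP => /hasPn all_used.
  have := uniq_leq_size (iota_uniq 1 (size used).+1)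
            (fun x hx => negbNE (all_used x hx)).
  by rewrite size_iota ltnn.
rewrite /mex1 head_filter_find //.
have := has_free; rewrite has_find size_iota => find_lt.
have := nth_find 0 has_free; rewrite nth_iota //.
set F := find _ _ in find_lt * => free_F; split => // b /andP [b_ge1 b_lt].
have b_before : b.-1 < F by lia.
have := before_find 0 b_before; rewrite nth_iota; last by lia.
by rewrite (_ : 1 + b.-1 = b); [move/negbFE | lia].
Qed.

Lemma perm_facts (s : seq nat) : is_perm s ->
  uniq s /\ forall x, (x \in s) = (1 <= x <= size s).
Proof.
move=> hp; split; first by rewrite (perm_uniq hp) iota_uniq.
by move=> x; rewrite (perm_mem hp) mem_iota; lia.
Qed.

Definition used_of (s col : seq nat) (i : nat) : seq nat :=
  [seq (if nth 0 s i < nth 0 s j then nth 0 col j else 0) | j <- iota 0 i].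

(* Invariant of the RITMO loop after processing the values > v: those indices
   carry their final colour, the others still carry 0. *)
Definition ritmo_inv (s col : seq nat) (v : nat) : Prop :=
  size col = size s /\ forall i, i < size s ->
    (v < nth 0 s i -> nth 0 col i = mex1 (used_of s col i)) /\
    (nth 0 s i <= v -> nth 0 col i = 0).

Lemma ritmo_step_inv (s col : seq nat) (v : nat) :
  is_perm s -> 1 <= v <= size s -> ritmo_inv s col v ->
  ritmo_inv s (ritmo_step s col v) v.-1.
Proof.
move=> hp hv [hsz hI]; have [hu hm] := perm_facts hp.
set i0 := index v s.
have hi0 : i0 < size s by rewrite index_mem hm.
have s_i0 : nth 0 s i0 = v by rewrite nth_index // hm.
have only_i0 j : j < size s -> nth 0 s j = v -> j = i0.
  by move=> hj hjv; rewrite /i0 -hjv index_uniq.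
rewrite /ritmo_step -/i0; split; first by rewrite size_set_nth hsz; lia.
move=> i hi; rewrite !nth_set_nth /=.
have s_i_range : 1 <= nth 0 s i <= size s by rewrite -hm mem_nth.
case: eqP => [->|i_ne].
- split=> [_|]; last by rewrite s_i0; lia.
  congr mex1; rewrite /used_of s_i0; apply/eq_in_map => j; rewrite mem_iota => hj.
  rewrite nth_set_nth /= (_ : (j == i0) = false); last by apply/eqP; lia.
  case: ltnP => // v_lt; apply: (proj2 (hI j ltac:(lia))).
  have : nth 0 s j != v by apply/eqP => /only_i0 ?; lia.
  lia.
- have s_i_ne : nth 0 s i != v by apply/eqP => /(only_i0 _ hi).
  have [h_done h_todo] := hI i hi; split; last by move=> ?; apply: h_todo; lia.
  move=> v_lt; rewrite h_done; last by lia.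
  congr mex1; rewrite /used_of; apply/eq_in_map => j; rewrite mem_iota => hj.
  rewrite nth_set_nth /=; case: ltnP => // lt_ij.
  rewrite (_ : (j == i0) = false) //; apply/eqP => ji0.
  by move: lt_ij; rewrite ji0 s_i0; lia.
Qed.

Lemma ritmo_invP (s : seq nat) : is_perm s -> ritmo_inv s (ritmo s) 0.
Proof.
move=> hp; have [_ hm] := perm_facts hp.
suff loop v col : v <= size s -> ritmo_inv s col v ->
    ritmo_inv s (foldl (ritmo_step s) col (rev (iota 1 v))) 0.
  apply: loop => //; split; first by rewrite size_nseq.
  move=> i hi; have : 1 <= nth 0 s i <= size s by rewrite -hm mem_nth.
  by split; [lia | rewrite nth_nseq hi].
elim: v col => [|v IH] col hv hinv //.
rewrite -[v.+1]addn1 iotaD rev_cat /= add1n.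
by apply: IH; [lia | apply: ritmo_step_inv => //; lia].
Qed.

Section RitmoColouring.
Variable s : seq nat.
Hypothesis s_perm : is_perm s.
Local Notation col := (ritmo s).

Lemma ritmoE (i : nat) : i < size s -> nth 0 col i = mex1 (used_of s col i).
Proof.
move=> hi; have [_ hm] := perm_facts s_perm; have [_ hI] := ritmo_invP s_perm.
have : 1 <= nth 0 s i <= size s by rewrite -hm mem_nth.
by move=> ?; apply: (proj1 (hI i hi)); lia.
Qed.

Lemma ritmo_pos (i : nat) : i < size s -> 1 <= nth 0 col i.
Proof. by move=> hi; rewrite ritmoE //; case: (mex1P (used_of s col i)). Qed.

Lemma ritmo_lower (i b : nat) : i < size s -> 1 <= b < nth 0 col i ->
  exists j, [/\ j < i, nth 0 s i < nth 0 s j & nth 0 col j = b].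
Proof.
move=> hi hb; rewrite ritmoE // in hb; case: (mex1P (used_of s col i)) => _ _ h.
case/mapP: (h b hb) => j; rewrite mem_iota => hj.
case: ltnP => hcmp hbj; last by move: hb; rewrite hbj; lia.
by exists j; split => //; lia.
Qed.

Lemma ritmo_neq (i j : nat) : j < i -> i < size s -> nth 0 s i < nth 0 s j ->
  nth 0 col j != nth 0 col i.
Proof.
move=> hji hi hlt; rewrite (ritmoE hi); case: (mex1P (used_of s col i)) => _ + _.
apply: contra => /eqP <-; apply/mapP; exists j; first by rewrite mem_iota; lia.
by rewrite hlt.
Qed.

Lemma ritmo_inversion (i j : nat) : j < i -> i < size s -> nth 0 s i < nth 0 s j ->
  nth 0 col j < nth 0 col i.
Proof.
move=> hji hi hlt; have col_ne := ritmo_neq hji hi hlt.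
rewrite ltnNge leq_eqVlt eq_sym (negbTE col_ne) /=; apply/negP => col_lt.
have [k [hkj hk hkc]] := ritmo_lower (i := j) (b := nth 0 col i) ltac:(lia)
  (ltac:(by rewrite ritmo_pos ?col_lt)).
by move: (ritmo_neq (i := i) (j := k) ltac:(lia) hi ltac:(lia)); rewrite hkc eqxx.
Qed.

Lemma ritmo_between (a L b : nat) : a < L -> L < size s -> nth 0 s a < nth 0 s L ->
  nth 0 col a <= b < nth 0 col L ->
  exists j, [/\ a < j < L, nth 0 s L < nth 0 s j & nth 0 col j = b].
Proof.
move=> haL hL hval hb.
have [j [hjL hj hjc]] := ritmo_lower (b := b) hL
  (ltac:(have := ritmo_pos (i := a) ltac:(lia); lia)).
exists j; split => //; apply/andP; split => //.
case: (ltngtP a j) => // [hja | haj]; last by move: hj; rewrite -haj; lia.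
have := ritmo_inversion hja ltac:(lia) ltac:(lia); lia.
Qed.
End RitmoColouring.

Lemma count_lt_mono (s : seq nat) (x y : nat) : x < y -> x \in s ->
  count (fun z => z < x) s < count (fun z => z < y) s.
Proof.
move=> hxy; elim: s => //= z s IH; rewrite inE => /orP [/eqP <-|hx].
  rewrite ltnn hxy add0n add1n ltnS.
  by apply: sub_count => w /= hw; lia.
have := IH hx; case: (ltnP z x); case: (ltnP z y) => /=; lia.
Qed.

Lemma pat_lt (s : seq nat) (p q : nat) : p < size s -> q < size s ->
  (nth 0 (pat s) p < nth 0 (pat s) q) = (nth 0 s p < nth 0 s q).
Proof.
move=> hp hq; rewrite /pat !(nth_map 0) //= ltnS.
case: (ltnP (nth 0 s p) (nth 0 s q)) => h.
  by apply: count_lt_mono => //; apply: mem_nth.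
apply/negbTE; rewrite -leqNgt; apply: sub_count => w /= hw; lia.
Qed.

Lemma active_site_window (n : nat) (pi c : seq nat) (y f : nat) :
  active_site n pi c y f ->
  exists sg off, [/\ is_perm sg, off + size pi < size sg,
    forall p, p < size pi ->
      (nth 0 sg (off + p) < nth 0 sg (off + size pi)) = (nth 0 pi p < y)
      /\ (nth 0 sg (off + size pi) < nth 0 sg (off + p)) = (y <= nth 0 pi p),
    forall p, p < size pi -> nth 0 (ritmo sg) (off + p) = nth 0 c p &
    nth 0 (ritmo sg) (off + size pi) = f].
Proof.
case=> y_range _ [_ [size_c [sg [[sg_perm _] [size_sg]]]]]; rewrite /en => -[pat_win col_win].
set m := size pi in size_c size_sg pat_win col_win *.
set u := rcons [seq x.*2 | x <- pi] (y.*2).-1.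
have size_star : size (star pi y) = m.+1 by rewrite /star /pat size_map size_rcons size_map.
have size_u : size u = m.+1 by rewrite size_rcons size_map.
rewrite size_star in size_c size_sg pat_win col_win.
have {}size_c : size c = m by move: size_c; rewrite size_rcons; case.
set off := size sg - m.+1 in pat_win col_win.
have order p q : p < m.+1 -> q < m.+1 ->
    (nth 0 sg (off + p) < nth 0 sg (off + q)) = (nth 0 u p < nth 0 u q).
  move=> hp hq; rewrite -!(nth_drop off) -pat_lt ?size_drop; try lia.
  by rewrite pat_win /star pat_lt ?size_u.
have u_pi p : p < m -> nth 0 u p = (nth 0 pi p).*2.
  by move=> hp; rewrite /u nth_rcons size_map hp (nth_map 0).
have u_last : nth 0 u m = (y.*2).-1 by rewrite /u nth_rcons size_map ltnn eqxx.
have colour p : nth 0 (ritmo sg) (off + p) = nth 0 (rcons c f) p.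
  by rewrite -nth_drop col_win.
exists sg, off; split => //; first by rewrite /off; lia.
- by move=> p hp; rewrite !order ?u_last ?u_pi //; lia.
- by move=> p hp; rewrite colour nth_rcons size_c hp.
- by rewrite colour nth_rcons size_c ltnn eqxx.
Qed.

Theorem mainTheorem14 (n : nat) (pi c : seq nat) (y f i : nat) :
  2 <= n ->
  inherited n pi c ->
  active_site n pi c y f ->
  1 <= i <= size pi ->
  [/\ (f <= at_ c i -> at_ pi i < y),
      (at_ pi i < y -> at_ c i < f ->
         exists k, [/\ i < k <= size pi, y <= at_ pi k & at_ c k = at_ c i]) &
      (at_ pi i < y -> at_ c i < f ->
         exists h, [/\ i < h <= size pi, y <= at_ pi h & at_ c h = f.-1])].
Proof.
move=> _ _ /active_site_window [sg [off [sg_perm last_in order colour colour_last]]] hi.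
rewrite /at_; set m := size pi in last_in order colour colour_last hi *.
have [below above] := order i.-1 ltac:(lia).
have col_i := colour i.-1 ltac:(lia).
have i_before_last : off + i.-1 < off + m by lia.
have later_colour b : nth 0 pi i.-1 < y -> nth 0 c i.-1 <= b < f ->
    exists k, [/\ i < k <= m, y <= nth 0 pi k.-1 & nth 0 c k.-1 = b].
  rewrite -below -col_i -colour_last => lt_y hb.
  have [j [/andP [hij hjL] hj hjc]] :=
    ritmo_between sg_perm i_before_last last_in lt_y hb.
  have [_ above_j] := order (j - off) ltac:(lia).
  exists (j - off).+1 => /=; rewrite -above_j -colour ?subnKC //; try lia.
  by split => //; lia.
split.
- move=> f_le; rewrite ltnNge; apply/negP; rewrite -above => hlt.
  have := ritmo_inversion sg_perm i_before_last last_in hlt; lia.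
- by move=> lt_y lt_f; apply: later_colour; lia.
- by move=> lt_y lt_f; apply: later_colour; lia.
Qed.
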